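(* The At-least-1 objective is UB-proof against a manipulator $m^-$ (one who can only remove edges) over both directed and undirected networks. That is, for every $k$, every (directed or undirected) social network $G$, every agent $m$ and every manipulation in which $m$ removes some of his edges (yielding $G^m$), we have \[\max_{P\in O(G^m)} u(m,P)\le\max_{P\in O(G)} u(m,P),\] where $O(\cdot)$ is the set of At-least-1 solutions, $u(m,P)$ is computed in the true network $G$, and the maximum over an empty solution set is taken to be $0$.
   Context: Let $A=\{a_1,\dots,a_n\}$ be a finite nonempty set of agents and $G=\langle A,E\rangle$ a directed or undirected graph without self-loops (the social network); $N(a)$ is the set of (out-)neighbours of $a$. For a coalition $C\subseteq A$ with $a\in C$, $u(a,C)=|C\cap N(a)|$. For $0<k\le n$, $\Pi_k$ is the set of partitions of $A$ into exactly $k$ nonempty coalitions; for $P\in\Pi_k$, $u(a,P)=u(a,C)$ where $C\in P$ contains $a$. The At-least-1 objective: $O(G)$ is the set of all $P\in\Pi_k$ such that every agent has utility at least $1$ (utilities computed in the network in question); if none exists, $O(G)=\emptyset$ and all agents are considered to have utility $0$. A manipulator $m$ of type $m^-$ may remove edges: in a directed network only outgoing edges $(m,a)\in E$; in an undirected network any edges incident to $m$. The reported network is $G^m$. The utility $u(m,P)$ of the manipulator is always computed with respect to his true neighbours in the original $G$. *)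

From mathcomp Require Import all_boot.
Set Implicit Arguments. Unset Strict Implicit. Unset Printing Implicit Defensive.

Section Hedonic.
Variable A : finType.

(* A social network on agents A is an edge relation e : rel A
   (e a b = there is an edge from a to b); no self-loops = irreflexive e;
   undirected = additionally symmetric e. *)

Definition nbhd (e : rel A) (a : A) : {set A} := [set b | e a b].

Definition util (e : rel A) (a : A) (C : {set A}) : nat := #|C :&: nbhd e a|.

Definition utilP (e : rel A) (a : A) (P : {set {set A}}) : nat :=
  util e a (pblock P a).

Definition Pi (k : nat) : {set {set {set A}}} :=
  [set P : {set {set A}} | partition P [set: A] && (#|P| == k)].

Definition Oatleast1 (e : rel A) (k : nat) : {set {set {set A}}} :=
  [set P in Pi k | [forall a : A, 0 < utilP e a P]].

Definition best_util (e_true e_rep : rel A) (k : nat) (m : A) : nat :=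
  \max_(P in Oatleast1 e_rep k) utilP e_true m P.

Definition manip_dir (e e' : rel A) (m : A) : Prop :=
  (forall x y, e' x y -> e x y) /\ (forall x y, x != m -> e' x y = e x y).

Definition manip_undir (e e' : rel A) (m : A) : Prop :=
  symmetric e' /\ (forall x y, e' x y -> e x y) /\
  (forall x y, x != m -> y != m -> e' x y = e x y).

End Hedonic.

From mathcomp Require Import all_boot.

(* Removing edges can only lower utilities, so every At-least-1 partition of
   the reported network G^m is also one of G; the maximum of u(m, .) over the
   smaller solution set is therefore no larger. *)

Section EdgeRemoval.
Variables (A : finType) (e e' : rel A).
Hypothesis sub_e'e : subrel e' e.

Lemma nbhd_subrel (a : A) : nbhd e' a \subset nbhd e a.
Proof. by apply/subsetP => b; rewrite !inE => /sub_e'e. Qed.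

Lemma util_subrel (a : A) (C : {set A}) : util e' a C <= util e a C.
Proof. exact/subset_leq_card/setIS/nbhd_subrel. Qed.

Lemma Oatleast1_subrel (k : nat) : Oatleast1 e' k \subset Oatleast1 e k.
Proof.
apply/subsetP => P; rewrite !inE => /andP[-> /forallP pos_e'] /=.
by apply/forallP => a; apply: leq_trans (pos_e' a) (util_subrel _ _).
Qed.

Lemma best_util_subrel (k : nat) (m : A) :
  best_util e e' k m <= best_util e e k m.
Proof.
apply/bigmax_leqP => P solP; apply: leq_bigmax_cond.
exact: subsetP (Oatleast1_subrel k) P solP.
Qed.

End EdgeRemoval.

Theorem theorem4 (A : finType) (k : nat) (m : A) :
  0 < k <= #|A| ->
  (forall e e' : rel A, irreflexive e -> manip_dir e e' m ->
     best_util e e' k m <= best_util e e k m) /\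
  (forall e e' : rel A, irreflexive e -> symmetric e -> manip_undir e e' m ->
     best_util e e' k m <= best_util e e k m).
Proof.
move=> _; split.
- by move=> e e' _ [sub _]; apply: best_util_subrel.
- by move=> e e' _ _ [_ [sub _]]; apply: best_util_subrel.
Qed.
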